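(* For every integer $n\ge 2$, the origami flip graph ${\rm OFG}(M_{2,n})$ has exactly $8(n+1)3^{n-3}$ edges.
   Context: The $2\times n$ Miura-ori $M_{2,n}$ ($n\ge 1$) has faces $\alpha_{i,j}$ ($i\in\{1,2\}$ row, $j\in\{1,\dots,n\}$ column), interior vertices $x_1,\dots,x_{n-1}$, and creases $e_0$ and $e_{3k-1},e_{3k},e_{3k+1}$ for $k=1,\dots,n-1$. At $x_k$ the incident creases are left $e_{3k-3}$, top $e_{3k-1}$, right $e_{3k}$, bottom $e_{3k+1}$ (the two sector angles adjacent to the left crease are obtuse, the others acute). Face $\alpha_{1,j}$ is bordered by those of $e_{3j-4}$ (iff $j\ge2$), $e_{3j-3}$, $e_{3j-1}$ (iff $j\le n-1$); face $\alpha_{2,j}$ by those of $e_{3j-2}$ (iff $j\ge2$), $e_{3j-3}$, $e_{3j+1}$ (iff $j\le n-1$). An MV assignment is a map $\mu$ from the creases to $\{1,-1\}$ (mountain/valley); it is locally valid if for each $k$ exactly one of $\mu(e_{3k-1}),\mu(e_{3k}),\mu(e_{3k+1})$ differs from $\mu(e_{3k-3})$. The face flip $\mu_\alpha$ negates $\mu$ exactly on the creases bordering face $\alpha$; $\alpha$ is flippable under $\mu$ if $\mu$ and $\mu_\alpha$ are both locally valid. ${\rm OFG}(M_{2,n})$ has the locally valid MV assignments as vertices, with $\mu\sim\mu_\alpha$ for each flippable $\alpha$. *)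

From mathcomp Require Import all_boot.
Set Implicit Arguments. Unset Strict Implicit. Unset Printing Implicit Defensive.

(* Crease e_c of M_{2,n}: c = 0, or c in {3k-1,3k,3k+1} for 1 <= k <= n-1,
   i.e. c = 0 or 2 <= c <= 3n-2. *)
Definition is_crease (n c : nat) : bool := (c == 0) || (2 <= c <= 3 * n - 2).

Definition crease (n : nat) := {i : 'I_(3 * n - 1) | is_crease n i}.

(* MV assignments: true = mountain (1), false = valley (-1). *)
Definition MV (n : nat) := {ffun crease n -> bool}.

(* value of mu on the crease with index c (false if c is not a crease) *)
Definition mv_at n (mu : MV n) (c : nat) : bool :=
  [exists e : crease n, (val (val e) == c) && mu e].

Definition locally_valid n (mu : MV n) : bool :=
  [forall k : 'I_n, (0 < k) ==>
     (count (fun c => mv_at mu c != mv_at mu (3 * k - 3))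
            [:: 3 * k - 1; 3 * k; 3 * k + 1] == 1)].

(* faces alpha_{i,j}: (false, j') is alpha_{1,j'+1}, (true, j') is alpha_{2,j'+1} *)
Definition face (n : nat) := (bool * 'I_n)%type.

Definition borders n (a : face n) (c : nat) : bool :=
  let j := (val a.2).+1 in
  if ~~ a.1 then
    [|| (2 <= j) && (c == 3 * j - 4), c == 3 * j - 3 | (j <= n - 1) && (c == 3 * j - 1)]
  else
    [|| (2 <= j) && (c == 3 * j - 2), c == 3 * j - 3 | (j <= n - 1) && (c == 3 * j + 1)].

Definition flip n (mu : MV n) (a : face n) : MV n :=
  [ffun e => mu e (+) borders a (val (val e))].

Definition flippable n (mu : MV n) (a : face n) : bool :=
  locally_valid mu && locally_valid (flip mu a).

Definition ofg_adj n (mu nu : MV n) : bool :=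
  locally_valid mu && [exists a : face n, flippable mu a && (nu == flip mu a)].

Definition ofg_edges (n : nat) : {set {set MV n}} :=
  [set E : {set MV n} | [exists mu : MV n, exists nu : MV n,
      [&& E == [set mu; nu], mu != nu & ofg_adj mu nu]]].

From mathcomp Require Import all_boot zify.
Set Implicit Arguments. Unset Strict Implicit. Unset Printing Implicit Defensive.

(* A locally valid assignment is determined by its value on e_0 and, at each
   vertex x_k, by which of e_(3k-1), e_(3k), e_(3k+1) disagrees with e_(3k-3);
   so valid assignments are coded by a bit and a word in {0,1,2}^(n-1).  A face
   flip toggles two creases at each of the one or two vertices on the face, and
   the flipped assignment is valid iff the code avoids one value at each of
   them: alpha_(i,j) is flippable at 2 * 3^(n-1) * (2/3)^d assignments, d the
   number of its vertices.  Flips are fixed-point-free involutions and different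
   faces flip different crease sets, so each edge {mu, mu_alpha} comes from
   exactly the two flippable pairs (mu, alpha), (mu_alpha, alpha); halving the
   number of flippable pairs gives 8 (n+1) 3^(n-3). *)

Section InvolutiveMoves.
Variables (T A : finType) (move : T -> A -> T) (legal : T -> A -> bool).
Hypothesis moveK : forall x a, move (move x a) a = x.
Hypothesis move_neq : forall x a, move x a != x.
Hypothesis move_inj : forall x, injective (move x).
Hypothesis legal_move : forall x a, legal x a -> legal (move x a) a.

Definition legal_moves := [set p : T * A | legal p.1 p.2].
Definition move_edge (p : T * A) : {set T} := [set p.1; move p.1 p.2].

Lemma move_edge_fiber x a : legal x a ->
  [set q in legal_moves | move_edge q == move_edge (x, a)] = [set (x, a); (move x a, a)].
Proof.
move=> lxa; apply/setP => -[y b]; rewrite !inE /move_edge /= !xpair_eqE.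
apply/andP/idP => [[_ /eqP Eyb]|/orP[]/andP[/eqP-> /eqP->]].
- have Ey : y \in [set x; move x a] by rewrite -Eyb set21.
  have Emy : move y b \in [set x; move x a] by rewrite -Eyb set22.
  case/set2P: Ey Emy => -> /set2P[E|E].
  + by move: (move_neq x b); rewrite E eqxx.
  + by rewrite (move_inj E) !eqxx.
  + by rewrite -{2}(moveK x a) in E; rewrite (move_inj E) !eqxx orbT.
  + by move: (move_neq (move x a) b); rewrite E eqxx.
- by rewrite lxa.
- by rewrite legal_move // moveK setUC.
Qed.

Lemma card_move_edges : 2 * #|move_edge @: legal_moves| = #|legal_moves|.
Proof.
rewrite -[#|legal_moves|]sum1_card (partition_big_imset move_edge) /= mulnC -sum_nat_const.
apply: eq_bigr => _ /imsetP[[x a] lxa ->]; rewrite sum1dep_card move_edge_fiber.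
  by rewrite cards2 xpair_eqE eq_sym (negbTE (move_neq _ _)).
by rewrite inE in lxa.
Qed.

Lemma card_legal_moves : #|legal_moves| = \sum_(a : A) #|[set x | legal x a]|.
Proof.
rewrite -sum1dep_card big_mkcond -(pair_bigA _ (fun x a => if legal x a then 1 else 0)).
by rewrite exchange_big; apply: eq_bigr => a _; rewrite -sum1dep_card [RHS]big_mkcond.
Qed.
End InvolutiveMoves.

Definition has_crease n p := (p < 3 * n - 1) && is_crease n p.

Lemma has_creaseP n p : reflect (exists e : crease n, val (val e) = p) (has_crease n p).
Proof.
apply: (iffP andP) => [[hp hc]|[[[q hq] hc] <-] //].
by exists (Sub (Ordinal hp) hc).
Qed.

Lemma mv_at_val n (mu : MV n) (e : crease n) : mv_at mu (val (val e)) = mu e.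
Proof.
apply/existsP/idP => [[e' /andP[/eqP E]]|]; last by exists e; rewrite eqxx.
by have -> : e = e' by apply/val_inj/val_inj.
Qed.

Lemma mv_at_ffun n (h : nat -> bool) p :
  mv_at ([ffun e : crease n => h (val (val e))] : MV n) p = has_crease n p && h p.
Proof.
apply/existsP/andP => [[e /andP[/eqP <-]]|[/has_creaseP[e <-] hp]].
  by rewrite ffunE => ->; split=> //; apply/has_creaseP; exists e.
by exists e; rewrite ffunE eqxx.
Qed.

Lemma mv_at_flip n (mu : MV n) a p :
  mv_at (flip mu a) p = has_crease n p && (mv_at mu p (+) borders a p).
Proof.
rewrite -(@mv_at_ffun n (fun p => mv_at mu p (+) borders a p)); congr mv_at.
by apply/ffunP => e; rewrite !ffunE mv_at_val.
Qed.

Lemma vertex_creases n i : i < n.-1 ->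
  [&& has_crease n (3 * i), has_crease n (3 * i + 2),
      has_crease n (3 * i + 3) & has_crease n (3 * i + 4)].
Proof. rewrite /has_crease /is_crease; lia. Qed.

Lemma crease_cases n p : has_crease n p -> exists q,
  [\/ p = 3 * q /\ q < n, p = 3 * q + 2 /\ q < n.-1 | p = 3 * q + 4 /\ q < n.-1].
Proof.
rewrite /has_crease /is_crease => hp.
exists (if p %% 3 == 1 then (p %/ 3).-1 else p %/ 3).
case: ifP hp => [/eqP|/negbT/eqP] h hp; first by apply: Or33; lia.
by case: (p %% 3 =P 0) => h0; [apply: Or31 | apply: Or32]; lia.
Qed.

Definition vertex_valid (f : nat -> bool) i :=
  count (fun c => f c != f (3 * i)) [:: 3 * i + 2; 3 * i + 3; 3 * i + 4] == 1.

Lemma locally_validE n (mu : MV n) :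
  locally_valid mu = [forall i : 'I_n.-1, vertex_valid (mv_at mu) i].
Proof.
have vertexE k : 0 < k ->
    (count (fun c => mv_at mu c != mv_at mu (3 * k - 3)) [:: 3 * k - 1; 3 * k; 3 * k + 1]
      == 1) = vertex_valid (mv_at mu) k.-1.
  case: k => // k _; rewrite /vertex_valid (_ : 3 * k.+1 - 3 = 3 * k); last lia.
  by congr (count _ _ == 1); congr [:: _; _; _]; lia.
apply/forallP/forallP => H i.
  have hi : i.+1 < n by case: i => /= i; lia.
  by move: (H (Ordinal hi)); rewrite /= vertexE.
apply/implyP => i0.
have hi : i.-1 < n.-1 by case: i i0 => /= i; lia.
by rewrite vertexE //; apply: H (Ordinal hi).
Qed.

Section VertexBorders.
Variables (n i : nat) (r : bool) (j : 'I_n).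
Hypothesis hi : i < n.-1.

Lemma borders_left : borders (r, j) (3 * i) = (i == j).
Proof. by case: r; rewrite /borders /=; apply/idP/idP; lia. Qed.
Lemma borders_top : borders (r, j) (3 * i + 2) = ~~ r && ((i.+1 == j) || (i == j)).
Proof. by case: r; rewrite /borders /=; apply/idP/idP; lia. Qed.
Lemma borders_right : borders (r, j) (3 * i + 3) = (i.+1 == j).
Proof. by case: r; rewrite /borders /=; apply/idP/idP; lia. Qed.
Lemma borders_bottom : borders (r, j) (3 * i + 4) = r && ((i.+1 == j) || (i == j)).
Proof. by case: r; rewrite /borders /=; apply/idP/idP; lia. Qed.
End VertexBorders.

Lemma flipK n (mu : MV n) a : flip (flip mu a) a = mu.
Proof. by apply/ffunP => e; rewrite !ffunE addbK. Qed.

Lemma borders_left_self n (a : face n) : borders a (3 * a.2).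
Proof. by case: a => [[] j]; rewrite /borders /=; lia. Qed.

Lemma has_crease_left n (j : 'I_n) : has_crease n (3 * j).
Proof. by case: j => j hj; rewrite /has_crease /is_crease /=; lia. Qed.

Lemma flip_neq n (mu : MV n) a : flip mu a != mu.
Proof.
apply/eqP => /ffunP flip_id; have /has_creaseP[e he] := has_crease_left a.2.
by move: (flip_id e); rewrite ffunE he borders_left_self; case: (mu e).
Qed.

Lemma flip_eq_borders n (mu : MV n) a b :
  flip mu a = flip mu b -> {in has_crease n, borders a =1 borders b}.
Proof.
move=> /ffunP Eab p /has_creaseP[e <-].
by move: (Eab e); rewrite !ffunE => /(congr1 (addb (mu e))); rewrite !addKb.
Qed.

Lemma borders_inj n (a b : face n) : 1 < n ->
  {in has_crease n, borders a =1 borders b} -> a = b.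
Proof.
case: a b => [r j] [r' j'] hn Eab.
have hj := ltn_ord j.
have Ej : j = j'.
  apply: val_inj; move: (Eab _ (has_crease_left j)).
  by rewrite (borders_left_self (r, j)) => /esym; case: r' {Eab}; rewrite /borders /=; lia.
subst j'.
pose p := if j == 0 :> nat then 2 else 3 * j - 1.
have hp : has_crease n p by rewrite /p /has_crease /is_crease; case: ifP => /eqP; lia.
have top : borders (false, j) p by rewrite /p /borders /=; case: ifP => /eqP; lia.
have not_bottom : borders (true, j) p = false.
  by apply/negbTE; rewrite /p /borders /=; case: ifP => /eqP; lia.
by case: r r' Eab => [] [] // Eab; move: (Eab p hp); rewrite top not_bottom.
Qed.

Lemma flip_inj n (mu : MV n) : 1 < n -> injective (flip mu).
Proof. by move=> hn a b /flip_eq_borders; apply: borders_inj. Qed.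

Lemma flippable_flip n (mu : MV n) a : flippable mu a -> flippable (flip mu a) a.
Proof. by rewrite /flippable flipK andbC. Qed.

Lemma ofg_edgesE n : 1 < n ->
  ofg_edges n = move_edge (@flip n) @: legal_moves (@flippable n).
Proof.
move=> hn; apply/setP => E; rewrite inE; apply/existsP/imsetP.
- case=> mu /existsP[nu /and3P[/eqP -> _ /andP[_ /existsP[a /andP[fa /eqP ->]]]]].
  by exists (mu, a); rewrite ?inE.
- case=> -[mu a]; rewrite inE /= => fa ->; exists mu; apply/existsP; exists (flip mu a).
  rewrite eqxx eq_sym flip_neq /ofg_adj; case/andP: (fa) => -> _.
  by apply/existsP; exists a; rewrite fa eqxx.
Qed.

(* A code (b, c) describes the assignment with value b on e_0 in which, at the
   vertex x_(i+1), the crease c i (0 = top, 1 = right, 2 = bottom) is the one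
   differing from the left crease; spine x k is then the value on e_(3k). *)
Definition code n := (bool * {ffun 'I_n.-1 -> 'I_3})%type.

Definition code_at n (c : {ffun 'I_n.-1 -> 'I_3}) k : nat :=
  if insub k is Some i then c i else 0.

Fixpoint spine n (x : code n) k : bool :=
  if k is k'.+1 then spine x k' (+) (code_at x.2 k' == 1) else x.1.

Definition code_val n (x : code n) p : bool :=
  let k := p %/ 3 in
  if p %% 3 == 0 then spine x k
  else if p %% 3 == 2 then spine x k (+) (code_at x.2 k == 0)
  else spine x k.-1 (+) (code_at x.2 k.-1 == 2).

Definition decode n (x : code n) : MV n := [ffun e => code_val x (val (val e))].

Definition differing (l t r : bool) : nat := if t != l then 0 else if r != l then 1 else 2.

Definition encode n (mu : MV n) : code n :=
  (mv_at mu 0, [ffun i : 'I_n.-1 =>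
     inord (differing (mv_at mu (3 * i)) (mv_at mu (3 * i + 2)) (mv_at mu (3 * i + 3)))]).

Lemma code_atE n (c : {ffun 'I_n.-1 -> 'I_3}) (i : 'I_n.-1) : code_at c i = c i.
Proof. by rewrite /code_at valK. Qed.

Section CodeAtVertex.
Variables (n i : nat) (x : code n).

Lemma code_val_left : code_val x (3 * i) = spine x i.
Proof.
have [Em Eq] : (3 * i) %% 3 = 0 /\ (3 * i) %/ 3 = i by lia.
by rewrite /code_val Em Eq.
Qed.
Lemma code_val_top : code_val x (3 * i + 2) = spine x i (+) (code_at x.2 i == 0).
Proof.
have [Em Eq] : (3 * i + 2) %% 3 = 2 /\ (3 * i + 2) %/ 3 = i by lia.
by rewrite /code_val Em Eq.
Qed.
Lemma code_val_right : code_val x (3 * i + 3) = spine x i (+) (code_at x.2 i == 1).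
Proof.
have [Em Eq] : (3 * i + 3) %% 3 = 0 /\ (3 * i + 3) %/ 3 = i.+1 by lia.
by rewrite /code_val Em Eq.
Qed.
Lemma code_val_bottom : code_val x (3 * i + 4) = spine x i (+) (code_at x.2 i == 2).
Proof.
have [Em Eq] : (3 * i + 4) %% 3 = 1 /\ (3 * i + 4) %/ 3 = i.+1 by lia.
by rewrite /code_val Em Eq.
Qed.
End CodeAtVertex.

Lemma mv_at_decode n (x : code n) p : mv_at (decode x) p = has_crease n p && code_val x p.
Proof. exact: mv_at_ffun. Qed.

Lemma decode_valid n (x : code n) : locally_valid (decode x).
Proof.
rewrite locally_validE; apply/forallP => i.
case/and4P: (vertex_creases (ltn_ord i)) => c0 c2 c3 c4.
rewrite /vertex_valid /= !mv_at_decode c0 c2 c3 c4 /=.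
rewrite code_val_left code_val_top code_val_right code_val_bottom code_atE.
by case: (x.2 i) => [[|[|[|t]]] ht] //=; case: (spine x i).
Qed.

Lemma differing_le l t r : differing l t r <= 2.
Proof. by rewrite /differing; case: (t != l); case: (r != l). Qed.

Lemma encode_vertex n (mu : MV n) (i : 'I_n.-1) :
  (encode mu).2 i = differing (mv_at mu (3 * i)) (mv_at mu (3 * i + 2)) (mv_at mu (3 * i + 3))
  :> nat.
Proof. by rewrite ffunE inordK // ltnS differing_le. Qed.

Lemma decodeK n : 0 < n -> cancel (@decode n) (@encode n).
Proof.
move=> hn [b c]; congr pair.
  by rewrite mv_at_decode (has_crease_left (Ordinal hn)).
apply/ffunP => i; apply: val_inj; rewrite /= encode_vertex.
case/and4P: (vertex_creases (ltn_ord i)) => c0 c2 c3 _.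
rewrite !mv_at_decode c0 c2 c3 code_val_left code_val_top code_val_right code_atE /differing /=.
by case: (c i) => [[|[|[|t]]] ht] //=; case: (spine (b, c) i).
Qed.

Lemma vertex_differing n (mu : MV n) (i : 'I_n.-1) : locally_valid mu ->
  let f := mv_at mu in let k := differing (f (3 * i)) (f (3 * i + 2)) (f (3 * i + 3)) in
  [/\ f (3 * i + 2) = f (3 * i) (+) (k == 0), f (3 * i + 3) = f (3 * i) (+) (k == 1)
    & f (3 * i + 4) = f (3 * i) (+) (k == 2)].
Proof.
rewrite locally_validE => /forallP /(_ i); rewrite /vertex_valid /= /differing.
by case: (mv_at mu (3 * i)); case: (mv_at mu (3 * i + 2));
  case: (mv_at mu (3 * i + 3)); case: (mv_at mu (3 * i + 4)).
Qed.

Lemma spine_encode n (mu : MV n) k : locally_valid mu -> k < n ->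
  spine (encode mu) k = mv_at mu (3 * k).
Proof.
move=> valid; elim: k => [|k IH] hk /=; first by rewrite muln0.
have hk' : k < n.-1 by lia.
rewrite (code_atE _ (Ordinal hk')) encode_vertex IH /=; last lia.
have -> : 3 * k.+1 = 3 * k + 3 by lia.
by case: (vertex_differing (Ordinal hk') valid) => /= _ E3 _; rewrite [RHS]E3.
Qed.

Lemma encodeK n (mu : MV n) : locally_valid mu -> decode (encode mu) = mu.
Proof.
move=> valid; apply/ffunP => e; rewrite ffunE -mv_at_val.
have /crease_cases[q [[-> hq]|[-> hq]|[-> hq]]] : has_crease n (val (val e)).
  by apply/has_creaseP; exists e.
- by rewrite code_val_left (spine_encode valid).
- rewrite code_val_top (spine_encode valid) ?(code_atE _ (Ordinal hq)) ?encode_vertex; last lia.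
  by case: (vertex_differing (Ordinal hq) valid).
- rewrite code_val_bottom (spine_encode valid) ?(code_atE _ (Ordinal hq)) ?encode_vertex; last lia.
  by case: (vertex_differing (Ordinal hq) valid).
Qed.

(* At a vertex where the flip toggles the left crease and a crease X, the vertex
   stays valid iff X was not the differing crease; where it toggles two non-left
   creases, iff the third one was not.  The face alpha_(r+1, j+1) is of the first
   kind at x_(j+1) (X = top or bottom by r) and of the second kind at x_j. *)
Definition flip_allowed n (r : bool) (j : nat) (i : 'I_n.-1) : pred 'I_3 :=
  fun t => ((i.+1 == j) ==> (val t != if r then 0 else 2)) &&
           ((i == j :> nat) ==> (val t != if r then 2 else 0)).

Lemma valid_flip_decode n (x : code n) r (j : 'I_n) :
  locally_valid (flip (decode x) (r, j)) = [forall i, flip_allowed r j i (x.2 i)].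
Proof.
rewrite locally_validE; apply: eq_forallb => i; have hi := ltn_ord i.
case/and4P: (vertex_creases hi) => c0 c2 c3 c4.
rewrite /vertex_valid /= !mv_at_flip !mv_at_decode c0 c2 c3 c4 /=.
rewrite code_val_left code_val_top code_val_right code_val_bottom code_atE.
rewrite borders_left // borders_top // borders_right // borders_bottom // /flip_allowed.
have : ~~ ((i.+1 == j) && (i == j :> nat)) by apply/negP; lia.
case: (i.+1 == j); case: (i == j :> nat); case: (x.2 i) => [[|[|[|t]]] ht] //;
  by case: r; case: (spine x i).
Qed.

Lemma card_flip_allowed n r j (i : 'I_n.-1) :
  #|flip_allowed r j i| = 3 - (i.+1 == j) - (i == j :> nat).
Proof.
have : ~~ ((i.+1 == j) && (i == j :> nat)) by apply/negP; lia.
rewrite /flip_allowed; case: (i.+1 == j); case: (i == j :> nat); case: r => //= _.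
all: by rewrite -sum1_card big_mkcond !big_ord_recr big_ord0.
Qed.

Lemma card_flippable n r (j : 'I_n) : 0 < n ->
  #|[set mu : MV n | flippable mu (r, j)]| =
  2 * \prod_(i < n.-1) (3 - (i.+1 == j) - (i == j :> nat)).
Proof.
move=> hn; pose allowed := [set c : {ffun 'I_n.-1 -> 'I_3} | c \in family (flip_allowed r j)].
have -> : [set mu : MV n | flippable mu (r, j)] = @decode n @: setX [set: bool] allowed.
  apply/setP => mu; rewrite inE; apply/andP/imsetP => [[valid fl]|[x]].
    exists (encode mu); last by rewrite encodeK.
    by rewrite !inE; apply/familyP/forallP; rewrite -valid_flip_decode encodeK.
  rewrite !inE => /familyP/forallP; rewrite -valid_flip_decode => fl ->.
  by rewrite decode_valid.
rewrite card_imset; last exact: can_inj (decodeK hn).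
rewrite cardsX cardsT card_bool cardsE card_family foldrE big_map big_enum /=.
by congr (2 * _); apply: eq_bigr => i _; rewrite card_flip_allowed.
Qed.

Lemma prod_vertex_factors m j :
  9 * \prod_(i < m) (3 - (i.+1 == j) - (i == j :> nat)) =
  3 ^ m * ((3 - (0 < j <= m)) * (3 - (j < m))).
Proof.
elim: m => [|m IH]; first by rewrite big_ord0; case: j => [|[|j]].
rewrite big_ord_recr /= mulnA IH expnS.
case: (ltngtP j m) => [lt|gt|->]; rewrite ?eqxx /=; nia.
Qed.

Lemma sum_vertex_factors m : 0 < m ->
  \sum_(j < m.+1) (3 - (0 < j <= m)) * (3 - (j < m)) = 4 * m + 8.
Proof.
case: m => // m _; rewrite big_ord_recr big_ord_recl /=.
rewrite (eq_bigr (fun _ => 4)) ?sum_nat_const ?card_ord; first lia.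
by move=> i _; rewrite /bump /= !ltnS ltn_ord ltnW.
Qed.

Lemma double_card_ofg_edges n : 1 < n ->
  2 * #|ofg_edges n| = 4 * \sum_(j < n) \prod_(i < n.-1) (3 - (i.+1 == j) - (i == j :> nat)).
Proof.
move=> hn; have hn0 : 0 < n := ltnW hn.
rewrite ofg_edgesE // (card_move_edges (@flipK n) (@flip_neq n) (fun mu => @flip_inj n mu hn))
  ?card_legal_moves; last exact: flippable_flip.
rewrite (eq_bigr (fun a => #|[set mu | flippable mu (a.1, a.2)]|)); last by case.
rewrite -(pair_bigA _ (fun r j => #|[set mu | flippable mu (r, j)]|)) big_bool /=.
under eq_bigr => j _ do rewrite card_flippable //.
under [X in _ + X = _]eq_bigr => j _ do rewrite card_flippable //.
by rewrite -!big_distrr -mulnDl.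
Qed.

Theorem theorem3p2 (n : nat) (hn : 2 <= n) :
  3 * #|ofg_edges n| = 8 * (n + 1) * 3 ^ (n - 2).
Proof.
move: (double_card_ofg_edges hn); case: n hn => // m hm /= two_edges.
have sum9 : 9 * \sum_(j < m.+1) \prod_(i < m) (3 - (i.+1 == j) - (i == j :> nat)) =
    3 * 3 ^ m.-1 * (4 * m + 8).
  rewrite -expnS prednK // -sum_vertex_factors // !big_distrr.
  by apply: eq_bigr => j _; apply: prod_vertex_factors.
have -> : m.+1 - 2 = m.-1 by lia.
move: two_edges sum9; move: #|_| (\sum_(j < _) _) (3 ^ m.-1) => E S p; nia.
Qed.
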